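(* Let $k$ be a field, $d_1,\ldots,d_n$ positive integers, $A=k[x_1, \ldots, x_n]/(x_1^{d_1}, \ldots, x_n^{d_n})$, and suppose that $t=\sum_{i=1}^n(d_i-1)$ is odd. If $A$ has the weak Lefschetz property, then so does $A[x]/(x^2)$, where $x$ is a new variable of degree $1$.
   Context: Algebras are graded by degree, $A=\bigoplus_{i\ge0}A_i$. A graded artinian algebra $A$ has the weak Lefschetz property if there is a linear form $\ell\in A_1$ such that for every $i$ the map $A_i\to A_{i+1}$, $a\mapsto \ell a$, is injective or surjective. *)

From HB Require Import structures.
From mathcomp Require Import all_boot all_order all_algebra.
From mathcomp Require Import mpoly.
Set Implicit Arguments. Unset Strict Implicit. Unset Printing Implicit Defensive.
Import GRing.Theory.
Local Open Scope ring_scope.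

(* p is homogeneous of degree i (the zero polynomial is homogeneous of every degree). *)
Definition homog_of_deg (k : fieldType) (n : nat) (i : nat) (p : {mpoly k[n]}) : Prop :=
  forall m, m \in msupp p -> mdeg m = i.

Definition in_mci_ideal (k : fieldType) (n : nat) (d : 'I_n -> nat) (p : {mpoly k[n]}) : Prop :=
  exists h : 'I_n -> {mpoly k[n]}, p = \sum_(j < n) h j * 'X_j ^+ (d j).

(* A = k[x]/I_d, A_i = R_i / (I_d)_i.  Multiplication by the class of l
   (l homogeneous of degree 1) from A_i to A_{i+1}: *)
Definition mult_injective (k : fieldType) (n : nat) (d : 'I_n -> nat)
    (l : {mpoly k[n]}) (i : nat) : Prop :=
  forall f : {mpoly k[n]}, homog_of_deg i f ->
    in_mci_ideal d (l * f) -> in_mci_ideal d f.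

Definition mult_surjective (k : fieldType) (n : nat) (d : 'I_n -> nat)
    (l : {mpoly k[n]}) (i : nat) : Prop :=
  forall g : {mpoly k[n]}, homog_of_deg i.+1 g ->
    exists2 f : {mpoly k[n]}, homog_of_deg i f & in_mci_ideal d (g - l * f).

Definition mci_WLP (k : fieldType) (n : nat) (d : 'I_n -> nat) : Prop :=
  exists2 l : {mpoly k[n]}, homog_of_deg 1 l &
    forall i : nat, mult_injective d l i \/ mult_surjective d l i.

(* The exponent vector of A[x]/(x^2): the new variable x is the last one,
   x_n, with exponent 2. *)
Definition extend_exp (n : nat) (d : 'I_n -> nat) (j : 'I_n.+1) : nat :=
  if unlift ord_max j is Some j' then d j' else 2%N.

From mathcomp Require Import all_boot all_order all_algebra.
From mathcomp Require Import mpoly zify.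
Set Implicit Arguments. Unset Strict Implicit. Unset Printing Implicit Defensive.
Import GRing.Theory.
Local Open Scope ring_scope.

(* The standard monomials (those not divisible by any x_j^{d_j}) form a basis of A,
   so multiplication by a linear form l = \sum_j c_j x_j becomes an explicit
   linear map on coefficient functions.  Injectivity of l in degree i + 1 forces
   it in degree i (for i < t), and surjectivity in degree i forces it in degree
   i + 1.  Complementation mu |-> (d - 1) - mu gives dim A_i = dim A_(t - i);
   as t = 2m + 1, A_m and A_(m+1) have equal dimension, so l : A_m -> A_(m+1)
   is bijective, l is injective up to degree m and surjective from degree m on.
   Since B = A[x]/(x^2) has B_i = A_i + x A_(i-1), multiplication by l + x on B
   is then injective in degrees i <= m and surjective in degrees i > m. *)

Section SquareSystems.
Variable K : fieldType.

Lemma mulmx_inj_surj N (M : 'M[K]_N) :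
  (forall v : 'rV_N, v *m M = 0 -> v = 0) <-> (forall w : 'rV_N, exists v, w = v *m M).
Proof.
split=> [inj w | surj].
  have rfM : row_full M by rewrite row_full_unit -row_free_unit; exact: inj_row_free.
  have /submxP [v ->] : (w <= M)%MS by exact: submx_full.
  by exists v.
have [f hf] := fin_all_exists (fun i : 'I_N => surj (row i 1%:M)).
have rfM : row_free M.
  rewrite row_free_unit -row_full_unit; apply/row_fullP; exists (\matrix_i f i).
  by apply/row_matrixP => i; rewrite row_mul rowK -hf.
by move=> v vM; apply: (row_free_inj rfM); rewrite vM mul0mx.
Qed.

Lemma square_system_inj_surj (I J : finType) (W : I -> J -> K) : #|I| = #|J| ->
  (forall phi : I -> K, (forall j, \sum_i phi i * W i j = 0) -> forall i, phi i = 0) <->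
  (forall psi : J -> K, exists phi : I -> K, forall j, psi j = \sum_i phi i * W i j).
Proof.
move=> eqIJ.
pose col (b : 'I_#|I|) : J := enum_val (cast_ord eqIJ b).
pose colidx (j : J) : 'I_#|I| := cast_ord (esym eqIJ) (enum_rank j).
have colK j : col (colidx j) = j by rewrite /col cast_ordKV enum_rankK.
have colidxK b : colidx (col b) = b by rewrite /colidx enum_valK cast_ordK.
pose M : 'M[K]_#|I| := \matrix_(a, b) W (enum_val a) (col b).
pose rowv (phi : I -> K) : 'rV_#|I| := \row_a phi (enum_val a).
pose funv (v : 'rV[K]_#|I|) (i : I) := v 0 (enum_rank i).
have rowvK v : rowv (funv v) = v by apply/rowP => a; rewrite mxE /funv enum_valK.
have rowvM phi j : (rowv phi *m M) 0 (colidx j) = \sum_i phi i * W i j.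
  rewrite mxE [RHS](reindex (@enum_val I (pred_of_simpl predT))) /=; last first.
    by exists enum_rank => i _; rewrite ?enum_valK ?enum_rankK.
  by apply: eq_bigr => a _; rewrite !mxE colK.
have vM v j : (v *m M) 0 (colidx j) = \sum_i funv v i * W i j.
  by rewrite -rowvM rowvK.
split=> [inj psi | surj phi phi0 i].
  have injM : forall v : 'rV_#|I|, v *m M = 0 -> v = 0.
    move=> v vM0; rewrite -[v]rowvK; apply/rowP => a; rewrite !mxE inj ?mxE //.
    by move=> j; rewrite -vM vM0 mxE.
  have [v hv] := (proj1 (mulmx_inj_surj M)) injM (\row_b psi (col b)).
  by exists (funv v) => j; rewrite -vM -hv mxE colK.
have surjM : forall w : 'rV_#|I|, exists v, w = v *m M.
  move=> w; have [phi' hphi'] := surj (fun j => w 0 (colidx j)).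
  exists (rowv phi'); apply/rowP => b.
  by rewrite -{2}(colidxK b) rowvM -hphi' colidxK.
have phiM0 : rowv phi *m M = 0.
  by apply/rowP => b; rewrite -(colidxK b) rowvM phi0 mxE.
have /rowP/(_ (enum_rank i)) := (proj2 (mulmx_inj_surj M)) surjM _ phiM0.
by rewrite !mxE enum_rankK.
Qed.

End SquareSystems.

Definition std_mnm n (d : 'I_n -> nat) (m : 'X_{1..n}) : bool := [forall j, m j < d j]%N.

Definition shiftX (k : fieldType) n (j : 'I_n) (phi : 'X_{1..n} -> k) (m : 'X_{1..n}) : k :=
  if (0 < m j)%N then phi (m - U_(j))%MM else 0.

Definition linmul (k : fieldType) n (c : 'I_n -> k) (phi : 'X_{1..n} -> k) (m : 'X_{1..n}) : k :=
  \sum_j c j * shiftX j phi m.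

Definition linform (k : fieldType) n (c : 'I_n -> k) : {mpoly k[n]} := \sum_j c j *: 'X_j.

Definition std_poly (k : fieldType) n (d : 'I_n -> nat) (i : nat) (phi : 'X_{1..n} -> k) :
  {mpoly k[n]} :=
  \sum_(x : 'X_{1..n < i.+1} | std_mnm d x && (mdeg x == i)) phi x *: 'X_[x].

Section Coefficients.
Variables (k : fieldType) (n : nat).
Implicit Types (f p : {mpoly k[n]}) (m mu : 'X_{1..n}) (c : 'I_n -> k).

Lemma mdeg_subU mu j : (0 < mu j)%N -> mdeg (mu - U_(j))%MM = (mdeg mu).-1.
Proof.
move=> mu_j; have Ujmu : (U_(j) <= mu)%MM by rewrite lep1mP -lt0n.
by rewrite -{2}(submK Ujmu) mdegD mdeg1 addn1.
Qed.

Lemma mcoeffMX_eq0 f (e m : 'X_{1..n}) : ~~ (e <= m)%MM -> (f * 'X_[e])@_m = 0.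
Proof.
apply: contraNeq; rewrite -mcoeff_msupp (perm_mem (msuppMX f e)) => /mapP [m' _ ->].
exact: lem_addr.
Qed.

Lemma mcoeff_mulX f j m : ('X_j * f)@_m = shiftX j (fun x => f@_x) m.
Proof.
rewrite mulrC /shiftX; case: posnP => mj.
  by apply: mcoeffMX_eq0; rewrite lep1mP mj.
have Ujm : (U_(j) <= m)%MM by rewrite lep1mP -lt0n mj.
by rewrite -{1}(submK Ujm) addmC mcoeffMX.
Qed.

Lemma mcoeff_linformM c f m : (linform c * f)@_m = linmul c (fun x => f@_x) m.
Proof.
rewrite mulr_suml raddf_sum; apply: eq_bigr => j _.
by rewrite -scalerAl /= mcoeffZ mcoeff_mulX.
Qed.

Lemma homog_of_degP i p : homog_of_deg i p <-> forall m, mdeg m != i -> p@_m = 0.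
Proof.
split=> [hp m | hp m]; last by rewrite mcoeff_msupp; apply: contraNeq => /hp ->.
by apply: contraNeq; rewrite -mcoeff_msupp => /hp ->.
Qed.

Lemma mcoeff_linform c m : (linform c)@_m = \sum_j c j * (U_(j)%MM == m)%:R.
Proof. by rewrite raddf_sum; apply: eq_bigr => j _; rewrite /= mcoeffZ mcoeffX. Qed.

Lemma linform_homog c : homog_of_deg 1 (linform c).
Proof.
apply/homog_of_degP => m m_ne1; rewrite mcoeff_linform big1 // => j _.
by case: eqP => [ej|]; [move: m_ne1; rewrite -ej mdeg1 | rewrite mulr0].
Qed.

Lemma homog1_linform p : homog_of_deg 1 p -> p = linform (fun j => p@_U_(j)).
Proof.
move/homog_of_degP=> hp; apply/mpolyP => m; rewrite mcoeff_linform.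
have [/eqP/mdeg1P [i /eqP ->] | m_ne1] := eqVneq (mdeg m) 1%N.
  rewrite (bigD1 i) //= eqxx mulr1 big1 ?addr0 // => j ji.
  by rewrite eq_mnm1 (negbTE ji) mulr0.
rewrite hp // big1 // => j _.
by case: eqP => [ej|]; [move: m_ne1; rewrite -ej mdeg1 | rewrite mulr0].
Qed.

Lemma linmul_homog c i f m : homog_of_deg i f -> mdeg m != i.+1 ->
  linmul c (fun x => f@_x) m = 0.
Proof.
move/homog_of_degP=> hf m_ne; rewrite /linmul big1 // => j _; rewrite /shiftX.
case: ifP => mj; last by rewrite mulr0.
rewrite hf ?mulr0 // mdeg_subU //; apply: contra m_ne => /eqP <-.
by rewrite prednK // mdegE (bigD1 j) //= (leq_trans mj (leq_addr _ _)).
Qed.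

End Coefficients.

Definition coef_injective (k : fieldType) n (d : 'I_n -> nat) (c : 'I_n -> k) (i : nat) :=
  forall phi : 'X_{1..n} -> k,
    (forall mu, std_mnm d mu -> mdeg mu = i.+1 -> linmul c phi mu = 0) ->
    forall nu, std_mnm d nu -> mdeg nu = i -> phi nu = 0.

Definition coef_surjective (k : fieldType) n (d : 'I_n -> nat) (c : 'I_n -> k) (i : nat) :=
  forall psi : 'X_{1..n} -> k, exists phi : 'X_{1..n} -> k,
    forall mu, std_mnm d mu -> mdeg mu = i.+1 -> psi mu = linmul c phi mu.

Section StandardMonomials.
Variables (k : fieldType) (n : nat) (d : 'I_n -> nat).
Implicit Types (p : {mpoly k[n]}) (m mu nu : 'X_{1..n}) (phi : 'X_{1..n} -> k).

Lemma std_mnmB mu (e : 'X_{1..n}) : std_mnm d mu -> std_mnm d (mu - e)%MM.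
Proof.
move=> /forallP mu_std; apply/forallP => j; rewrite mnmBE.
exact: leq_ltn_trans (leq_subr _ _) (mu_std j).
Qed.

Lemma in_mci_idealP p : in_mci_ideal d p <-> forall m, std_mnm d m -> p@_m = 0.
Proof.
split=> [[h ->] m m_std | p_std].
  rewrite raddf_sum big1 //= => j _; rewrite mpolyXn; apply: mcoeffMX_eq0.
  apply/mnm_lepP => /(_ j); rewrite mulmnE mnm1E eqxx mul1n.
  by move/forallP: m_std => /(_ j); rewrite ltnNge => /negP.
pose pick_var m := [pick j | (d j <= m j)%N].
exists (fun j => \sum_(m <- msupp p | pick_var m == Some j) p@_m *: 'X_[m - U_(j) *+ d j]).
rewrite {1}(mpolyE p); under [RHS]eq_bigr do rewrite mulr_suml big_mkcond.
rewrite exchange_big /=; apply: eq_bigr => m _; rewrite /pick_var.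
case: pickP => [j0 hj0 | none]; last first.
  have m_std : std_mnm d m by apply/forallP => j; rewrite ltnNge none.
  by rewrite p_std // scale0r big1 // => j _; case: eqP.
rewrite (bigD1 j0) //= eqxx big1 ?addr0; last first.
  by move=> j jj0; case: eqP => // -[] /esym /eqP; rewrite (negbTE jj0).
rewrite mpolyXn -scalerAl -mpolyXD submK //; apply/mnm_lepP => i.
by rewrite mulmnE mnm1E; case: eqP => [<-|_]; rewrite ?mul1n ?mul0n.
Qed.

Lemma mcoeff_std_poly i phi m :
  (std_poly d i phi)@_m = if std_mnm d m && (mdeg m == i) then phi m else 0.
Proof.
rewrite raddf_sum /=; under eq_bigr do rewrite mcoeffZ mcoeffX.
case: ifP => [/andP [m_std /eqP m_deg] | m_out].
  have m_lt : (mdeg m < i.+1)%N by rewrite m_deg.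
  rewrite (bigD1 (BMultinom m_lt)) /=; last by rewrite m_std m_deg eqxx.
  rewrite eqxx mulr1 big1 ?addr0 // => x /andP [_ x_ne].
  by rewrite bmeqP /= in x_ne; rewrite (negbTE x_ne) mulr0.
rewrite big1 // => x /andP [x_std x_deg]; case: eqP => [xm|]; last by rewrite mulr0.
by move: m_out; rewrite -xm x_std x_deg.
Qed.

Lemma std_poly_homog i phi : homog_of_deg i (std_poly d i phi).
Proof.
apply/homog_of_degP => m m_ne; rewrite mcoeff_std_poly.
by case: ifP => // /andP [_ m_deg]; rewrite m_deg in m_ne.
Qed.

End StandardMonomials.

Section CoefficientWLP.
Variables (k : fieldType) (n : nat) (d : 'I_n -> nat) (c : 'I_n -> k).
Implicit Types (mu nu : 'X_{1..n}) (phi psi : 'X_{1..n} -> k).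

Lemma linmul_eq_on phi phi' mu : std_mnm d mu ->
  (forall nu, std_mnm d nu -> mdeg nu = (mdeg mu).-1 -> phi nu = phi' nu) ->
  linmul c phi mu = linmul c phi' mu.
Proof.
move=> mu_std eq_phi; apply: eq_bigr => j _; rewrite /shiftX.
by case: ifP => // mu_j; rewrite eq_phi ?std_mnmB ?mdeg_subU.
Qed.

Lemma mcoeff_linform_std_poly i phi mu : std_mnm d mu -> mdeg mu = i.+1 ->
  (linform c * std_poly d i phi)@_mu = linmul c phi mu.
Proof.
move=> mu_std mu_deg; rewrite mcoeff_linformM; apply: linmul_eq_on => // nu nu_std.
by rewrite mu_deg mcoeff_std_poly nu_std => ->; rewrite eqxx.
Qed.

Lemma mult_injectiveP i : mult_injective d (linform c) i <-> coef_injective d c i.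
Proof.
split=> [inj phi phi0 | inj f f_homog /in_mci_idealP lf0].
  have phi_homog : homog_of_deg i (std_poly d i phi) by exact: std_poly_homog.
  have: in_mci_ideal d (linform c * std_poly d i phi).
    apply/in_mci_idealP => mu mu_std; have [mu_deg|mu_deg] := eqVneq (mdeg mu) i.+1.
      by rewrite mcoeff_linform_std_poly // phi0.
    by rewrite mcoeff_linformM (linmul_homog c phi_homog).
  move/(inj _ phi_homog)/in_mci_idealP => std0 nu nu_std nu_deg.
  by have := std0 nu nu_std; rewrite mcoeff_std_poly nu_std nu_deg eqxx.
apply/in_mci_idealP => nu nu_std; have [nu_deg|nu_deg] := eqVneq (mdeg nu) i.
  by apply: (inj (fun x => f@_x)) nu_std nu_deg => mu mu_std _; rewrite -mcoeff_linformM lf0.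
by move/homog_of_degP: f_homog; apply.
Qed.

Lemma mult_surjectiveP i : mult_surjective d (linform c) i <-> coef_surjective d c i.
Proof.
split=> [surj psi | surj g g_homog].
  have [f _ /in_mci_idealP lf] := surj _ (@std_poly_homog _ _ d i.+1 psi).
  exists (fun x => f@_x) => mu mu_std mu_deg.
  have := lf mu mu_std; rewrite mcoeffB mcoeff_std_poly mu_std mu_deg eqxx mcoeff_linformM.
  by move/eqP; rewrite subr_eq0 => /eqP.
have [phi hphi] := surj (fun x => g@_x).
have phi_homog : homog_of_deg i (std_poly d i phi) by exact: std_poly_homog.
exists (std_poly d i phi) => //.
apply/in_mci_idealP => mu mu_std; rewrite mcoeffB.
have [mu_deg|mu_deg] := eqVneq (mdeg mu) i.+1.
  by rewrite mcoeff_linform_std_poly // hphi // subrr.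
move/homog_of_degP: g_homog => -> //.
by rewrite mcoeff_linformM (linmul_homog c phi_homog) // subr0.
Qed.

End CoefficientWLP.

Section Propagation.
Variables (k : fieldType) (n : nat) (d : 'I_n -> nat) (c : 'I_n -> k).
Implicit Types (mu nu : 'X_{1..n}) (phi psi : 'X_{1..n} -> k).

Lemma eq_linmul phi phi' mu : phi =1 phi' -> linmul c phi mu = linmul c phi' mu.
Proof. by move=> eq_phi; apply: eq_bigr => j _; rewrite /shiftX; case: ifP; rewrite ?eq_phi. Qed.

Lemma linmul_sum (I : finType) (F : I -> 'X_{1..n} -> k) mu :
  linmul c (fun x => \sum_a F a x) mu = \sum_a linmul c (F a) mu.
Proof.
rewrite /linmul exchange_big /=; apply: eq_bigr => j _; rewrite /shiftX.
by case: ifP => _; rewrite ?mulr_sumr // mulr0 big1 // => a _; rewrite mulr0.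
Qed.

Lemma linmulZ (a : k) phi mu : linmul c (fun x => a * phi x) mu = a * linmul c phi mu.
Proof.
rewrite /linmul mulr_sumr; apply: eq_bigr => j _; rewrite /shiftX.
by case: ifP; rewrite ?mulr0 // mulrCA.
Qed.

Lemma linmul_shiftX j phi mu : linmul c (shiftX j phi) mu = shiftX j (linmul c phi) mu.
Proof.
rewrite /linmul /shiftX; case: posnP => mu_j.
  rewrite big1 // => r _; case: ifP => _; last by rewrite mulr0.
  by rewrite mnmBE mu_j sub0n /= mulr0.
apply: eq_bigr => r _; rewrite !mnmBE !mnm1E.
have [->|rj] := eqVneq r j; first by rewrite mu_j.
rewrite /= !subn0 mu_j (submDA mu U_(r) U_(j)) addmC -submDA.
by case: ifP; rewrite ?mulr0.
Qed.

Lemma coef_surjective_succ i : coef_surjective d c i -> coef_surjective d c i.+1.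
Proof.
(* Charge each monomial mu to the first variable x_j dividing it, and lift the
   part of psi charged to x_j through surjectivity in degree i. *)
move=> surj psi.
pose first_var mu := [pick j | (0 < mu j)%N].
pose psi_ j nu := if first_var (nu + U_(j))%MM == Some j then psi (nu + U_(j))%MM else 0.
have [phi_ hphi_] := fin_all_exists (fun j => surj (psi_ j)).
exists (fun x => \sum_j shiftX j (phi_ j) x) => mu mu_std mu_deg.
rewrite linmul_sum; under eq_bigr do rewrite linmul_shiftX.
have [j0 mu_j0 j0_pos] : exists2 j0, first_var mu = Some j0 & (0 < mu j0)%N.
  rewrite /first_var; case: pickP => [j hj|none]; first by exists j.
  have : mdeg mu = 0%N by rewrite mdegE big1 // => j _; have := none j; case: (mu j).
  by rewrite mu_deg.
have psi_E j : (0 < mu j)%N -> psi_ j (mu - U_(j))%MM = if j == j0 then psi mu else 0.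
  move=> mu_j; rewrite /psi_ submK ?lep1mP -?lt0n // mu_j0.
  by rewrite (inj_eq Some_inj) eq_sym.
rewrite (bigD1 j0) //= big1 ?addr0 => [|j jj0]; rewrite /shiftX.
  by rewrite j0_pos -hphi_ ?std_mnmB ?mdeg_subU ?mu_deg // psi_E // eqxx.
case: posnP => // mu_j.
by rewrite -hphi_ ?std_mnmB ?mdeg_subU ?mu_deg // psi_E // (negbTE jj0).
Qed.

Lemma coef_injective_pred i : (i < \sum_j (d j).-1)%N ->
  coef_injective d c i.+1 -> coef_injective d c i.
Proof.
move=> i_lt inj phi phi0 nu nu_std nu_deg.
have [j nu_j] : exists j, ((nu j).+1 < d j)%N.
  apply/existsP; apply: contraTT i_lt => /existsPn top; rewrite -leqNgt -nu_deg mdegE.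
  by apply: leq_sum => j _; have := top j; rewrite -leqNgt; case: (d j).
have nuX_std : std_mnm d (nu + U_(j))%MM.
  apply/forallP => r; rewrite mnmDE mnm1E; case: eqP => [<-|_]; first by rewrite addn1.
  by rewrite addn0; move/forallP: nu_std.
have nuX_deg : mdeg (nu + U_(j))%MM = i.+1 by rewrite mdegD mdeg1 nu_deg addn1.
have := inj (shiftX j phi) _ _ nuX_std nuX_deg.
rewrite /shiftX mnmDE mnm1E eqxx addn1 addmK; apply=> mu mu_std mu_deg.
rewrite linmul_shiftX /shiftX; case: ifP => // mu_j.
by apply: phi0; rewrite ?std_mnmB ?mdeg_subU ?mu_deg.
Qed.

End Propagation.

Section StandardBasis.
Variables (n : nat) (d : 'I_n -> nat).

Definition std_deg (i : nat) : finType :=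
  {x : 'X_{1..n < i.+1} | std_mnm d x && (mdeg x == i)}.

Definition std_val i (x : std_deg i) : 'X_{1..n} := val (val x).

Lemma std_val_std i (x : std_deg i) : std_mnm d (std_val x).
Proof. by case/andP: (valP x). Qed.

Lemma std_val_deg i (x : std_deg i) : mdeg (std_val x) = i.
Proof. by case/andP: (valP x) => _ /eqP. Qed.

Lemma std_val_inj i : injective (@std_val i).
Proof. by move=> x y /val_inj/val_inj. Qed.

Lemma std_val_surj i mu :
  std_mnm d mu -> mdeg mu = i -> exists x : std_deg i, std_val x = mu.
Proof.
move=> mu_std mu_deg; have mu_lt : (mdeg mu < i.+1)%N by rewrite mu_deg.
have mu_in : std_mnm d (BMultinom mu_lt) && (mdeg mu == i) by rewrite mu_std mu_deg eqxx.
by exists (Sub (BMultinom mu_lt) mu_in).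
Qed.

End StandardBasis.

Section Duality.
Variables (n : nat) (d : 'I_n -> nat).
Hypothesis d_pos : forall j, (0 < d j)%N.

Let t := (\sum_j (d j).-1)%N.
Let socle : 'X_{1..n} := [multinom (d j).-1 | j < n].

Lemma std_mnm_le_socle mu : std_mnm d mu -> (mu <= socle)%MM.
Proof.
move=> /forallP mu_std; apply/mnm_lepP => j; rewrite mnmE.
by have := mu_std j; case: (d j).
Qed.

Lemma std_mnm_socleB mu : std_mnm d (socle - mu)%MM.
Proof.
apply/forallP => j; rewrite mnmBE mnmE.
by apply: leq_ltn_trans (leq_subr _ _) _; rewrite ltn_predL d_pos.
Qed.

Lemma mdeg_socleB mu : std_mnm d mu -> mdeg (socle - mu)%MM = (t - mdeg mu)%N.
Proof.
move=> /std_mnm_le_socle /submK socleE; have mdeg_socle : mdeg socle = t.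
  by rewrite mdegE; apply: eq_bigr => j _; rewrite mnmE.
by rewrite -mdeg_socle -{2}socleE mdegD addnK.
Qed.

Lemma socleBK mu : std_mnm d mu -> (socle - (socle - mu))%MM = mu.
Proof.
move=> /std_mnm_le_socle /mnm_lepP mu_le; apply/mnmP => j.
by rewrite !mnmBE subKn.
Qed.

Lemma card_std_deg_le i j : (i + j = t)%N -> (#|std_deg d i| <= #|std_deg d j|)%N.
Proof.
move=> ij_t; have deg_dual (x : std_deg d i) : mdeg (socle - std_val x)%MM = j.
  by rewrite mdeg_socleB ?std_val_std // std_val_deg -ij_t addKn.
have dual_lt (x : std_deg d i) : (mdeg (socle - std_val x)%MM < j.+1)%N.
  by rewrite deg_dual.
have dual_in (x : std_deg d i) :
    std_mnm d (BMultinom (dual_lt x)) && (mdeg (socle - std_val x)%MM == j).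
  by rewrite std_mnm_socleB deg_dual eqxx.
pose dual x : std_deg d j := Sub (BMultinom (dual_lt x)) (dual_in x).
apply: (@leq_card _ _ dual) => x y /(congr1 (@std_val _ d j)) eq_dual.
apply: std_val_inj; rewrite -(socleBK (std_val_std x)) -(socleBK (std_val_std y)).
by congr (_ - _)%MM.
Qed.

Lemma card_std_deg_mid m : t = (m + m.+1)%N -> #|std_deg d m| = #|std_deg d m.+1|.
Proof.
move=> t_mid; apply/eqP; rewrite eqn_leq !card_std_deg_le //.
by rewrite addnC.
Qed.

End Duality.

Section MiddleDegree.
Variables (k : fieldType) (n : nat) (d : 'I_n -> nat) (c : 'I_n -> k).
Implicit Types (mu nu : 'X_{1..n}) (phi psi : 'X_{1..n} -> k).

Let delta i (a : std_deg d i) (x : 'X_{1..n}) : k := (std_val a == x)%:R.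

Lemma sum_std_deg_delta i (F : std_deg d i -> k) (a : std_deg d i) :
  \sum_b F b * delta b (std_val a) = F a.
Proof.
rewrite (bigD1 a) //= /delta eqxx mulr1 big1 ?addr0 // => b ba.
by rewrite (inj_eq (@std_val_inj _ _ _)) (negbTE ba) mulr0.
Qed.

Lemma linmul_std_deg i phi (b : std_deg d i.+1) :
  linmul c phi (std_val b) =
  \sum_(a : std_deg d i) phi (std_val a) * linmul c (delta a) (std_val b).
Proof.
under eq_bigr do rewrite -linmulZ; rewrite -linmul_sum.
apply: linmul_eq_on (std_val_std b) _ => nu nu_std; rewrite std_val_deg /= => nu_deg.
by have [a <-] := std_val_surj nu_std nu_deg; rewrite sum_std_deg_delta.
Qed.

Lemma coef_injective_surjective_mid m : #|std_deg d m| = #|std_deg d m.+1| ->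
  coef_injective d c m <-> coef_surjective d c m.
Proof.
pose W (a : std_deg d m) (b : std_deg d m.+1) := linmul c (delta a) (std_val b).
move=> /(square_system_inj_surj W) [injW surjW].
split=> [inj psi | surj phi phi0 nu nu_std nu_deg].
  have inj_sys phiT : (forall b, \sum_a phiT a * W a b = 0) -> forall a, phiT a = 0.
    move=> phiT0 a; rewrite -(sum_std_deg_delta phiT a).
    apply: (inj (fun x => \sum_b phiT b * delta b x)) (std_val_std a) (std_val_deg a).
    move=> mu mu_std mu_deg.
    have [b <-] := std_val_surj mu_std mu_deg; rewrite linmul_std_deg -[RHS](phiT0 b).
    by apply: eq_bigr => a' _; rewrite sum_std_deg_delta.
  have [phiT psiE] := injW inj_sys (fun b => psi (std_val b)).
  exists (fun x => \sum_a phiT a * delta a x) => mu mu_std mu_deg.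
  have [b <-] := std_val_surj mu_std mu_deg; rewrite psiE linmul_std_deg.
  by apply: eq_bigr => a _; rewrite sum_std_deg_delta.
have surj_sys psiT : exists phiT, forall b, psiT b = \sum_a phiT a * W a b.
  have [phi' phi'E] := surj (fun x => \sum_b psiT b * delta b x).
  exists (fun a => phi' (std_val a)) => b.
  by rewrite -linmul_std_deg -phi'E ?std_val_std ?std_val_deg // sum_std_deg_delta.
have [a <-] := std_val_surj nu_std nu_deg.
apply: (surjW surj_sys (fun a => phi (std_val a))) => b.
by rewrite -linmul_std_deg phi0 ?std_val_std ?std_val_deg.
Qed.

End MiddleDegree.

Section Extension.
Variables (k : fieldType) (n : nat) (d : 'I_n -> nat) (c : 'I_n -> k).
Implicit Types (mu nu : 'X_{1..n}) (M : 'X_{1..n.+1}).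

(* The coefficients of l + x, where l = linform c and x is the last variable. *)
Definition extend_coef (J : 'I_n.+1) : k := if unlift ord_max J is Some j then c j else 1.

Definition extend_mnm mu (e : nat) : 'X_{1..n.+1} :=
  [multinom if unlift ord_max J is Some j then mu j else e | J < n.+1].

Definition restrict_mnm M : 'X_{1..n} := [multinom M (lift ord_max j) | j < n].

Lemma extend_mnm_lift mu e j : extend_mnm mu e (lift ord_max j) = mu j.
Proof. by rewrite mnmE liftK. Qed.

Lemma extend_mnm_max mu e : extend_mnm mu e ord_max = e.
Proof. by rewrite mnmE unlift_none. Qed.

Lemma restrict_mnmK M : extend_mnm (restrict_mnm M) (M ord_max) = M.
Proof. by apply/mnmP => J; rewrite mnmE; case: unliftP => [j ->|->]; rewrite ?mnmE. Qed.

Lemma extend_mnmK mu e : restrict_mnm (extend_mnm mu e) = mu.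
Proof. by apply/mnmP => j; rewrite mnmE extend_mnm_lift. Qed.

Lemma mdeg_extend_mnm mu e : mdeg (extend_mnm mu e) = (mdeg mu + e)%N.
Proof.
rewrite !mdegE (bigD1_ord ord_max (P := predT)) //= extend_mnm_max addnC.
by congr (_ + _)%N; apply: eq_bigr => j _; rewrite extend_mnm_lift.
Qed.

Lemma std_extend_mnm mu e :
  std_mnm (extend_exp d) (extend_mnm mu e) = std_mnm d mu && (e < 2)%N.
Proof.
apply/forallP/andP => [ext_std | [/forallP mu_std e_lt] J].
  split; last by have := ext_std ord_max; rewrite extend_mnm_max /extend_exp unlift_none.
  apply/forallP => j; have := ext_std (lift ord_max j).
  by rewrite extend_mnm_lift /extend_exp liftK.
by rewrite mnmE /extend_exp; case: unliftP.
Qed.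

Lemma extend_mnm_subU mu e j :
  (extend_mnm mu e - U_(lift ord_max j))%MM = extend_mnm (mu - U_(j))%MM e.
Proof.
apply/mnmP => J; rewrite mnmBE mnm1E !mnmE; case: unliftP => [j' ->|->].
  by rewrite mnmBE mnm1E (inj_eq (@lift_inj _ ord_max)).
by rewrite eq_sym (negbTE (neq_lift _ _)) subn0.
Qed.

Lemma extend_mnm_subUmax mu e : (extend_mnm mu e - U_(ord_max))%MM = extend_mnm mu e.-1.
Proof.
apply/mnmP => J; rewrite mnmBE mnm1E !mnmE; case: unliftP => [j' ->|->].
  by rewrite (negbTE (neq_lift _ _)) subn0.
by rewrite eqxx subn1.
Qed.

Lemma linmul_extend (phi : 'X_{1..n.+1} -> k) mu e :
  linmul extend_coef phi (extend_mnm mu e) =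
  linmul c (fun nu => phi (extend_mnm nu e)) mu + shiftX ord_max phi (extend_mnm mu e).
Proof.
rewrite /linmul (bigD1_ord ord_max (P := predT)) //= addrC /extend_coef unlift_none mul1r.
congr (_ + _); apply: eq_bigr => j _.
by rewrite liftK /shiftX extend_mnm_lift extend_mnm_subU.
Qed.

Lemma coef_injective_extend i : coef_injective d c i -> coef_injective d c i.-1 ->
  coef_injective (extend_exp d) extend_coef i.
Proof.
move=> inj inj_pred phi phi0 M; rewrite -(restrict_mnmK M) std_extend_mnm mdeg_extend_mnm.
move: (restrict_mnm M) (M ord_max) => mu e /andP [mu_std e_lt] M_deg.
have phi0_low nu : std_mnm d nu -> mdeg nu = i -> phi (extend_mnm nu 0) = 0.
  apply: (inj (fun nu => phi (extend_mnm nu 0))) => nu' nu'_std nu'_deg.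
  have := phi0 (extend_mnm nu' 0).
  rewrite std_extend_mnm mdeg_extend_mnm nu'_std nu'_deg addn0 linmul_extend.
  by rewrite /shiftX extend_mnm_max addr0; apply.
case: e e_lt M_deg => [|[|//]] _ M_deg; first by apply: phi0_low; rewrite // -M_deg addn0.
rewrite addn1 in M_deg; subst i.
apply: (inj_pred (fun nu => phi (extend_mnm nu 1))) mu_std erefl.
move=> nu nu_std nu_deg; have := phi0 (extend_mnm nu 1).
rewrite std_extend_mnm nu_std mdeg_extend_mnm nu_deg addn1 linmul_extend.
by rewrite /shiftX extend_mnm_max extend_mnm_subUmax phi0_low ?addr0 ?nu_deg //; apply.
Qed.

Lemma coef_surjective_extend i : coef_surjective d c i.+1 -> coef_surjective d c i ->
  coef_surjective (extend_exp d) extend_coef i.+1.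
Proof.
move=> surj_succ surj psi.
have [phi0 phi0E] := surj_succ (fun nu => psi (extend_mnm nu 0)).
have [phi1 phi1E] := surj (fun nu => psi (extend_mnm nu 1) - phi0 nu).
exists (fun M => if M ord_max == 0%N then phi0 (restrict_mnm M) else phi1 (restrict_mnm M)).
move=> M; rewrite -(restrict_mnmK M) std_extend_mnm mdeg_extend_mnm.
move: (restrict_mnm M) (M ord_max) => mu e /andP [mu_std e_lt] M_deg.
rewrite linmul_extend /shiftX extend_mnm_max.
under eq_linmul do rewrite extend_mnm_max extend_mnmK.
case: e e_lt M_deg => [|[|//]] _ M_deg /=.
  by rewrite addr0 phi0E // -M_deg addn0.
rewrite extend_mnm_subUmax extend_mnm_max extend_mnmK -phi1E ?subrK //.
by move: M_deg; rewrite addn1 => -[].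
Qed.

End Extension.

Section OddSocleDegree.
Variables (k : fieldType) (n : nat) (d : 'I_n -> nat) (c : 'I_n -> k) (m : nat).
Hypothesis d_pos : forall j, (0 < d j)%N.
Hypothesis t_mid : (\sum_j (d j).-1 = m + m.+1)%N.
Hypothesis coef_wlp : forall i, coef_injective d c i \/ coef_surjective d c i.

Lemma coef_bijective_mid : coef_injective d c m /\ coef_surjective d c m.
Proof.
have := coef_injective_surjective_mid c (card_std_deg_mid d_pos t_mid).
by case: (coef_wlp m) => wlp_m [inj_surj surj_inj]; split; auto.
Qed.

Lemma coef_injective_le i : (i <= m)%N -> coef_injective d c i.
Proof.
move=> i_le; rewrite -(subKn i_le); elim: (m - i)%N => [|j IH].
  by rewrite subn0; case: coef_bijective_mid.
have [m_le|j_lt] := leqP m j.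
  by have -> : (m - j.+1 = m - j)%N by lia.
have m_succ : (m - j = (m - j.+1).+1)%N by lia.
by apply: coef_injective_pred; [rewrite t_mid; lia | rewrite -m_succ].
Qed.

Lemma coef_surjective_ge i : (m <= i)%N -> coef_surjective d c i.
Proof.
move=> /subnK <-; elim: (i - m)%N => [|j IH]; first by case: coef_bijective_mid.
by rewrite addSn; apply: coef_surjective_succ.
Qed.

Lemma coef_wlp_extend i :
  coef_injective (extend_exp d) (extend_coef c) i \/
  coef_surjective (extend_exp d) (extend_coef c) i.
Proof.
have [i_le|m_lt] := leqP i m.
  left; apply: coef_injective_extend; first exact: coef_injective_le.
  by apply: coef_injective_le; lia.
right; case: i m_lt => // i m_le.
by apply: coef_surjective_extend; apply: coef_surjective_ge; lia.
Qed.

End OddSocleDegree.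

Theorem proposition4p13 (k : fieldType) (n : nat) (d : 'I_n -> nat) :
  (forall j, 0 < d j)%N ->
  odd (\sum_(j < n) (d j).-1) ->
  mci_WLP k d ->
  mci_WLP k (extend_exp d).
Proof.
move=> d_pos t_odd [l l_homog l_wlp].
pose c j := l@_U_(j); have l_lin : l = linform c := homog1_linform l_homog.
have coef_wlp i : coef_injective d c i \/ coef_surjective d c i.
  by rewrite -mult_injectiveP -mult_surjectiveP -l_lin.
pose m := (\sum_j (d j).-1)./2.
have t_mid : (\sum_j (d j).-1 = m + m.+1)%N.
  by rewrite -{1}(odd_double_half (\sum_j (d j).-1)) t_odd addnS -addnn.
exists (linform (extend_coef c)); first exact: linform_homog.
move=> i; rewrite mult_injectiveP mult_surjectiveP.
exact: coef_wlp_extend d_pos t_mid coef_wlp i.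
Qed.
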